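(* Let $\sigma,b$ and $x$ be as in the context. There exist $C\in\mathcal{C}$ and $\delta^*\in1/\mathcal{C}$ such that for all $\delta\le\delta^*$ and all $\xi\in\mathbb{R}^2$, \[ \frac1C|\xi|_{A_\delta(x)}\le|\xi|_{\bar A_\delta(x)}\le C|\xi|_{A_\delta(x)}\quad\text{and}\quad\frac1C|\xi|_{A_\delta(x)}\le|\xi|_{A_\delta(\hat x)}\le C|\xi|_{A_\delta(x)}, \] where $\hat x=x+\delta b(x)$.
   Context: $\sigma,b:\mathbb{R}^2\to\mathbb{R}^2$ are $C^3$; $\partial_gf=\sum_ig^i\partial_{x_i}f$, $[f,g]=\partial_gf-\partial_fg$. $A_\delta(y)$ is the matrix with columns $\delta^{1/2}\sigma(y),\delta^{3/2}[b,\sigma](y)$; $\bar A_\delta(x)$ has columns $\delta^{1/2}(\sigma(x)+\delta\partial_b\sigma(x))$, $\delta^{3/2}[b,\sigma](x)$; for an invertible $2\times2$ matrix $M$, $|\xi|_M=|M^{-1}\xi|$. $\lambda(y)$ is the smallest eigenvalue of $A(y)A(y)^T$ where $A(y)$ has columns $\sigma(y),[b,\sigma](y)$; $n(y)=\sum_{k=0}^3\sum_{|\alpha|=k}(|\partial^\alpha b(y)|+|\partial^\alpha\sigma(y)|)$. Local hypotheses: $\lambda(y)\ge\Lambda\in(0,1]$ and $n(y)\le N$ (with $N\ge1$) for $|y-x|<1$; there is a differentiable $\kappa_\sigma$ with $\partial_\sigma\sigma=\kappa_\sigma\sigma$, $|\kappa_\sigma|,|\nabla\kappa_\sigma|\le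 n$. $\mathcal{C}=\{K(N/\Lambda)^q:K,q\ge1\text{ universal}\}$, $1/\mathcal{C}=\{c:1/c\in\mathcal{C}\}$. *)

From Stdlib Require Import Reals List.
From Coquelicot Require Import Coquelicot.
Open Scope R_scope.

Definition pt := (R * R)%type.

Definition vadd (u v : pt) : pt := (fst u + fst v, snd u + snd v).
Definition vscal (a : R) (u : pt) : pt := (a * fst u, a * snd u).
Definition vnorm (u : pt) : R := sqrt (fst u ^ 2 + snd u ^ 2).
Definition vdist (u v : pt) : R := vnorm (fst u - fst v, snd u - snd v).

Definition d1 (f : pt -> R) : pt -> R :=
  fun p => Derive (fun t => f (t, snd p)) (fst p).
Definition d2 (f : pt -> R) : pt -> R :=
  fun p => Derive (fun t => f (fst p, t)) (snd p).

(* Iterated partial derivative along a word of directions (true = x_1, false = x_2). *)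
Fixpoint dword (w : list bool) (f : pt -> R) : pt -> R :=
  match w with
  | nil => f
  | d :: w' => (if d then d1 else d2) (dword w' f)
  end.

Definition C3f (f : pt -> R) : Prop :=
  (forall w : list bool, (length w <= 2)%nat -> forall p : pt,
      ex_derive (fun t => dword w f (t, snd p)) (fst p) /\
      ex_derive (fun t => dword w f (fst p, t)) (snd p)) /\
  (forall w : list bool, (length w <= 3)%nat -> forall p : pt,
      continuous (dword w f) p).

Definition C3 (g : pt -> pt) : Prop :=
  C3f (fun p => fst (g p)) /\ C3f (fun p => snd (g p)).

Definition dpart (a1 a2 : nat) (f : pt -> R) : pt -> R :=
  Nat.iter a1 d1 (Nat.iter a2 d2 f).
Definition dpartv (a1 a2 : nat) (g : pt -> pt) (y : pt) : pt :=
  (dpart a1 a2 (fun p => fst (g p)) y, dpart a1 a2 (fun p => snd (g p)) y).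

Definition dirder (g f : pt -> pt) (y : pt) : pt :=
  vadd (vscal (fst (g y)) (dpartv 1 0 f y)) (vscal (snd (g y)) (dpartv 0 1 f y)).

Definition bracket (f g : pt -> pt) (y : pt) : pt :=
  vadd (dirder g f y) (vscal (-1) (dirder f g y)).

(* 2x2 real matrices, given by their two columns. *)
Definition mat2 := (pt * pt)%type.
Definition mdet (M : mat2) : R :=
  fst (fst M) * snd (snd M) - fst (snd M) * snd (fst M).
Definition minvertible (M : mat2) : Prop := mdet M <> 0.
Definition minv_apply (M : mat2) (xi : pt) : pt :=
  let a := fst M in let c := snd M in
  (/ mdet M * (snd c * fst xi - fst c * snd xi),
   / mdet M * (- snd a * fst xi + fst a * snd xi)).
Definition mnorm (M : mat2) (xi : pt) : R := vnorm (minv_apply M xi).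

(* M M^T, as a symmetric matrix with entries (m11, m12, m22). *)
Definition gram (M : mat2) : R * R * R :=
  let a := fst M in let c := snd M in
  (fst a ^ 2 + fst c ^ 2, fst a * snd a + fst c * snd c, snd a ^ 2 + snd c ^ 2).
Definition is_eigenvalue_sym (S : R * R * R) (mu : R) : Prop :=
  let '(m11, m12, m22) := S in (m11 - mu) * (m22 - mu) - m12 * m12 = 0.
Definition min_eig_ge (M : mat2) (L : R) : Prop :=
  forall mu, is_eigenvalue_sym (gram M) mu -> L <= mu.

Definition Amat (sigma b : pt -> pt) (y : pt) : mat2 := (sigma y, bracket b sigma y).
Definition Adelta (sigma b : pt -> pt) (delta : R) (y : pt) : mat2 :=
  (vscal (sqrt delta) (sigma y), vscal (delta * sqrt delta) (bracket b sigma y)).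
Definition Abar (sigma b : pt -> pt) (delta : R) (x : pt) : mat2 :=
  (vscal (sqrt delta) (vadd (sigma x) (vscal delta (dirder b sigma x))),
   vscal (delta * sqrt delta) (bracket b sigma x)).

Definition nfun (sigma b : pt -> pt) (y : pt) : R :=
  sum_f_R0 (fun k =>
    sum_f_R0 (fun i => vnorm (dpartv i (k - i) b y) + vnorm (dpartv i (k - i) sigma y)) k) 3.

Definition grad (f : pt -> R) (y : pt) : pt := (d1 f y, d2 f y).

(* With a = delta^(1/2), each matrix to be compared has columns a u and a^3 w,
   and the two matrices of a pair differ by |u - u'| = O(a^2): for the bar matrix
   u' - u = delta d_b sigma(x), for the shifted point the mean value theorem bounds
   sigma(x_hat) - sigma(x).  Their determinants are a^4 det(u, w), and |det(u, w)|
   is at least Lam up to an O(delta) error.  By Cramer's rule the coordinates of the columns of one matrix in the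
   basis of the other are O(poly(N) / Lam); the only delicate one,
   det(u', u - u') / (a^2 det(u', w')), is O(1) precisely because |u - u'| = O(a^2). *)
From Pilot Require Import Defs.
From Stdlib Require Import Reals Lra Psatz.
From Coquelicot Require Import Coquelicot.
Open Scope R_scope.

Lemma vnorm_ge0 u : 0 <= vnorm u.
Proof. apply sqrt_pos. Qed.

Lemma vnorm_sqr u : vnorm u * vnorm u = fst u ^ 2 + snd u ^ 2.
Proof. apply sqrt_sqrt; nra. Qed.

Lemma Rabs_le_vnorm_sqr z u : z ^ 2 <= fst u ^ 2 + snd u ^ 2 -> Rabs z <= vnorm u.
Proof.
  intros Hz. rewrite <- sqrt_Rsqr_abs. apply sqrt_le_1_alt.
  unfold Rsqr; lra.
Qed.

Lemma Rabs_fst_le_vnorm u : Rabs (fst u) <= vnorm u.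
Proof. apply Rabs_le_vnorm_sqr; nra. Qed.

Lemma Rabs_snd_le_vnorm u : Rabs (snd u) <= vnorm u.
Proof. apply Rabs_le_vnorm_sqr; nra. Qed.

Lemma Rabs_mdet_le u v : Rabs (mdet (u, v)) <= vnorm u * vnorm v.
Proof.
  unfold mdet, vnorm; cbn [fst snd].
  rewrite <- sqrt_Rsqr_abs, <- sqrt_mult_alt by nra. apply sqrt_le_1_alt.
  unfold Rsqr. pose proof (pow2_ge_0 (fst u * fst v + snd u * snd v)). nra.
Qed.

Lemma vnorm_vadd_le u v : vnorm (vadd u v) <= vnorm u + vnorm v.
Proof.
  destruct u as [u1 u2], v as [v1 v2].
  pose proof (vnorm_ge0 (u1, u2)); pose proof (vnorm_ge0 (v1, v2)).
  pose proof (vnorm_sqr (u1, u2)); pose proof (vnorm_sqr (v1, v2)).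
  cbn [fst snd] in *.
  assert (CS : u1 * v1 + u2 * v2 <= vnorm (u1, u2) * vnorm (v1, v2)).
  { apply Rsqr_incr_0_var; [| nra]. unfold Rsqr.
    replace (vnorm (u1, u2) * vnorm (v1, v2) * (vnorm (u1, u2) * vnorm (v1, v2)))
      with ((u1 ^ 2 + u2 ^ 2) * (v1 ^ 2 + v2 ^ 2)) by nra.
    pose proof (pow2_ge_0 (u1 * v2 - u2 * v1)). nra. }
  rewrite <- (sqrt_Rsqr (vnorm (u1, u2) + vnorm (v1, v2))) by lra.
  apply sqrt_le_1_alt. unfold Rsqr; cbn [fst snd vadd]. nra.
Qed.

Lemma vnorm_vscal c u : vnorm (vscal c u) = Rabs c * vnorm u.
Proof.
  unfold vnorm, vscal; cbn [fst snd].
  rewrite <- sqrt_Rsqr_abs, <- sqrt_mult_alt by apply Rle_0_sqr.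
  f_equal. unfold Rsqr; ring.
Qed.

Lemma vnorm_le_l1 u : vnorm u <= Rabs (fst u) + Rabs (snd u).
Proof.
  pose proof (Rabs_pos (fst u)); pose proof (Rabs_pos (snd u)).
  rewrite <- (sqrt_Rsqr (Rabs (fst u) + Rabs (snd u))) by lra.
  apply sqrt_le_1_alt. rewrite Rsqr_plus, <- !Rsqr_abs. unfold Rsqr; nra.
Qed.

Lemma minv_apply_lincomb (B B' : mat2) xi :
  mdet B <> 0 -> mdet B' <> 0 ->
  minv_apply B' xi =
  vadd (vscal (fst (minv_apply B xi)) (minv_apply B' (fst B)))
       (vscal (snd (minv_apply B xi)) (minv_apply B' (snd B))).
Proof.
  destruct B as [[b1 b2] [c1 c2]], B' as [[p1 p2] [q1 q2]], xi as [x1 x2].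
  unfold minv_apply, mdet, vadd, vscal; simpl; intros HB HB'.
  f_equal; field; auto.
Qed.

Lemma mnorm_change_basis (B B' : mat2) xi :
  mdet B <> 0 -> mdet B' <> 0 ->
  mnorm B' xi <=
  (vnorm (minv_apply B' (fst B)) + vnorm (minv_apply B' (snd B))) * mnorm B xi.
Proof.
  intros HB HB'. unfold mnorm. rewrite (minv_apply_lincomb B B') by assumption.
  set (eta := minv_apply B xi).
  eapply Rle_trans; [apply vnorm_vadd_le|]. rewrite !vnorm_vscal.
  pose proof (Rabs_fst_le_vnorm eta); pose proof (Rabs_snd_le_vnorm eta).
  pose proof (vnorm_ge0 (minv_apply B' (fst B))); pose proof (vnorm_ge0 (minv_apply B' (snd B))).
  nra.
Qed.

Lemma min_eig_ge_Rabs_mdet M L : 0 < L -> min_eig_ge M L -> L <= Rabs (mdet M).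
Proof.
  intros HL H. destruct M as [[a1 a2] [c1 c2]].
  unfold min_eig_ge, gram, is_eigenvalue_sym, mdet in *; cbn [fst snd] in *.
  set (m11 := a1^2 + c1^2) in *. set (m12 := a1*a2 + c1*c2) in *. set (m22 := a2^2+c2^2) in *.
  set (D := sqrt ((m11 - m22)^2 + 4*m12^2)).
  assert (HD : D * D = (m11 - m22)^2 + 4*m12^2).
  { apply sqrt_sqrt. pose proof (pow2_ge_0 (m11 - m22)); pose proof (pow2_ge_0 m12). lra. }
  assert (HD0 : 0 <= D) by apply sqrt_pos.
  (* The eigenvalues (m11 + m22 -+ D) / 2 are at least L and multiply to det^2. *)
  assert (Hm : L <= (m11 + m22 - D)/2) by (apply H; nra).
  assert (Hp : L <= (m11 + m22 + D)/2) by (apply H; nra).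
  assert (Hprod : ((m11 + m22 - D)/2) * ((m11 + m22 + D)/2) = (a1*c2 - c1*a2)^2)
    by (unfold m11, m12, m22 in *; nra).
  destruct (Rcase_abs (a1*c2 - c1*a2));
    [rewrite Rabs_left by lra | rewrite Rabs_right by lra]; nra.
Qed.

Lemma Rabs_mdet_le_mul u v P Q :
  vnorm u <= P -> vnorm v <= Q -> Rabs (mdet (u, v)) <= P * Q.
Proof.
  intros Hu Hv. eapply Rle_trans; [apply Rabs_mdet_le|].
  apply Rmult_le_compat; auto using vnorm_ge0.
Qed.

Lemma Rabs_div_le X Y M L : Rabs X <= M -> 0 < L -> L <= Rabs Y -> Rabs (X / Y) <= M / L.
Proof.
  intros HX HL HY. unfold Rdiv. rewrite Rabs_mult, Rabs_inv.
  apply Rmult_le_compat; auto using Rabs_pos.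
  - left; apply Rinv_0_lt_compat; lra.
  - apply Rinv_le_contravar; lra.
Qed.

Lemma vdist_sym u v : vdist u v = vdist v u.
Proof. unfold vdist, vnorm; cbn [fst snd]. f_equal. ring. Qed.

(* With [a = sqrt delta] this is the common shape of [Adelta] and [Abar]. *)
Definition dmat (a : R) (u w : pt) : mat2 := (vscal a u, vscal (a * a * a) w).

Lemma mdet_dmat a u w : mdet (dmat a u w) = a ^ 4 * mdet (u, w).
Proof. unfold mdet, dmat, vscal; cbn [fst snd]. ring. Qed.

Lemma mdet_dmat_neq0 a u w : a <> 0 -> mdet (u, w) <> 0 -> mdet (dmat a u w) <> 0.
Proof.
  intros Ha Hd. rewrite mdet_dmat.
  apply Rmult_integral_contrapositive_currified; auto using pow_nonzero.
Qed.

Lemma minv_apply_dmat_fst a u w u' :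
  a <> 0 -> mdet (u, w) <> 0 ->
  minv_apply (dmat a u w) (vscal a u') =
  (mdet (u', w) / mdet (u, w), mdet (u, u') / (a * a) / mdet (u, w)).
Proof.
  intros Ha Hd. pose proof (mdet_dmat_neq0 a u w Ha Hd) as Hd'.
  destruct u as [u1 u2], w as [w1 w2], u' as [v1 v2].
  unfold minv_apply, dmat, mdet, vscal in *; simpl in *.
  f_equal; field; auto.
Qed.

Lemma minv_apply_dmat_snd a u w w' :
  a <> 0 -> mdet (u, w) <> 0 ->
  minv_apply (dmat a u w) (vscal (a * a * a) w') =
  (a * a * mdet (w', w) / mdet (u, w), mdet (u, w') / mdet (u, w)).
Proof.
  intros Ha Hd. pose proof (mdet_dmat_neq0 a u w Ha Hd) as Hd'.
  destruct u as [u1 u2], w as [w1 w2], w' as [v1 v2].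
  unfold minv_apply, dmat, mdet, vscal in *; simpl in *.
  f_equal; field; auto.
Qed.

Lemma mnorm_dmat_le a P Q Rr L u w u' w' xi :
  0 < a -> a * a <= 1 -> 0 < L ->
  vnorm u <= P -> vnorm u' <= P -> vnorm w <= Q -> vnorm w' <= Q ->
  vdist u u' <= Rr * (a * a) ->
  L <= Rabs (mdet (u, w)) -> L <= Rabs (mdet (u', w')) ->
  mnorm (dmat a u' w') xi <= (2 * P * Q + P * Rr + Q * Q) / L * mnorm (dmat a u w) xi.
Proof.
  intros Ha Ha1 HL Hu Hu' Hw Hw' Hdist Hdet Hdet'.
  assert (Ha0 : a <> 0) by lra.
  assert (Hd : mdet (u, w) <> 0) by (intro E; rewrite E, Rabs_R0 in Hdet; lra).
  assert (Hd' : mdet (u', w') <> 0) by (intro E; rewrite E, Rabs_R0 in Hdet'; lra).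
  eapply Rle_trans; [apply (mnorm_change_basis (dmat a u w)); apply mdet_dmat_neq0; assumption|].
  apply Rmult_le_compat_r; [apply vnorm_ge0|].
  change (fst (dmat a u w)) with (vscal a u).
  change (snd (dmat a u w)) with (vscal (a * a * a) w).
  rewrite minv_apply_dmat_fst, minv_apply_dmat_snd by assumption.
  assert (Hcross : Rabs (mdet (u', u) / (a * a)) <= P * Rr).
  { replace (mdet (u', u)) with (mdet (u', (fst u - fst u', snd u - snd u')))
      by (unfold mdet; cbn [fst snd]; ring).
    unfold Rdiv. rewrite Rabs_mult, Rabs_inv, (Rabs_right (a * a)) by nra.
    apply (Rmult_le_reg_r (a * a)); [nra|].
    rewrite Rmult_assoc, Rinv_l, Rmult_1_r by nra.
    eapply Rle_trans; [apply Rabs_mdet_le_mul; eauto|]. nra. }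
  assert (Hww : Rabs (a * a * mdet (w, w')) <= Q * Q).
  { rewrite Rabs_mult, (Rabs_right (a * a)) by nra.
    pose proof (Rabs_mdet_le_mul w w' Q Q Hw Hw'). pose proof (Rabs_pos (mdet (w, w'))). nra. }
  pose proof (Rabs_div_le _ _ _ _ (Rabs_mdet_le_mul u w' P Q Hu Hw') HL Hdet').
  pose proof (Rabs_div_le _ _ _ _ Hcross HL Hdet').
  pose proof (Rabs_div_le _ _ _ _ Hww HL Hdet').
  pose proof (Rabs_div_le _ _ _ _ (Rabs_mdet_le_mul u' w P Q Hu' Hw) HL Hdet').
  match goal with |- vnorm ?c1 + vnorm ?c2 <= _ =>
    pose proof (vnorm_le_l1 c1); pose proof (vnorm_le_l1 c2) end.
  cbn [fst snd] in *.
  replace ((2 * P * Q + P * Rr + Q * Q) / L)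
    with (P * Q / L + P * Rr / L + (Q * Q / L + P * Q / L)) by (field; lra).
  lra.
Qed.

Definition mnorm_equiv (C : R) (A B : mat2) : Prop :=
  forall xi, / C * mnorm A xi <= mnorm B xi /\ mnorm B xi <= C * mnorm A xi.

Lemma mnorm_dmat_equiv a P Q Rr L u w u' w' C :
  0 < a -> a * a <= 1 -> 0 < L ->
  vnorm u <= P -> vnorm u' <= P -> vnorm w <= Q -> vnorm w' <= Q ->
  vdist u u' <= Rr * (a * a) ->
  L <= Rabs (mdet (u, w)) -> L <= Rabs (mdet (u', w')) ->
  (2 * P * Q + P * Rr + Q * Q) / L <= C ->
  mnorm_equiv C (dmat a u w) (dmat a u' w').
Proof.
  intros Ha Ha1 HL Hu Hu' Hw Hw' Hdist Hdet Hdet' HC xi.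
  set (K := (2 * P * Q + P * Rr + Q * Q) / L) in HC.
  assert (HK : 0 < K).
  { pose proof (Rabs_mdet_le_mul u w P Q Hu Hw).
    pose proof (vnorm_ge0 u); pose proof (vnorm_ge0 w).
    assert (0 <= Rr).
    { assert (0 <= vdist u u') by apply vnorm_ge0. assert (0 < a * a) by nra. nra. }
    unfold K. apply Rdiv_lt_0_compat; nra. }
  rewrite vdist_sym in Hdist.
  pose proof (mnorm_dmat_le a P Q Rr L u w u' w' xi Ha Ha1 HL Hu Hu' Hw Hw') as Hle.
  pose proof (mnorm_dmat_le a P Q Rr L u' w' u w xi Ha Ha1 HL Hu' Hu Hw' Hw Hdist Hdet' Hdet) as Hge.
  rewrite vdist_sym in Hdist. specialize (Hle Hdist Hdet Hdet'). fold K in Hle, Hge.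
  pose proof (vnorm_ge0 (minv_apply (dmat a u w) xi)).
  pose proof (vnorm_ge0 (minv_apply (dmat a u' w') xi)).
  unfold mnorm in *. split.
  - apply (Rmult_le_reg_l C); [lra|]. rewrite <- Rmult_assoc, Rinv_r, Rmult_1_l by lra. nra.
  - nra.
Qed.

Lemma nfun_ge_first_order sigma b y :
  vnorm (b y) + vnorm (sigma y)
  + (vnorm (dpartv 1 0 b y) + vnorm (dpartv 0 1 b y))
  + (vnorm (dpartv 1 0 sigma y) + vnorm (dpartv 0 1 sigma y)) <= nfun sigma b y.
Proof.
  change (vnorm (b y)) with (vnorm (dpartv 0 0 b y)).
  change (vnorm (sigma y)) with (vnorm (dpartv 0 0 sigma y)).
  unfold nfun. cbn [sum_f_R0 Nat.sub].
  repeat match goal with |- context [vnorm ?u] =>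
    let H := fresh in pose proof (vnorm_ge0 u) as H; revert H; generalize (vnorm u); intros ? ? end.
  lra.
Qed.

Lemma dirder_vnorm_le g f y :
  vnorm (dirder g f y) <= vnorm (g y) * (vnorm (dpartv 1 0 f y) + vnorm (dpartv 0 1 f y)).
Proof.
  unfold dirder. eapply Rle_trans; [apply vnorm_vadd_le|]. rewrite !vnorm_vscal.
  pose proof (Rabs_fst_le_vnorm (g y)); pose proof (Rabs_snd_le_vnorm (g y)).
  pose proof (vnorm_ge0 (dpartv 1 0 f y)); pose proof (vnorm_ge0 (dpartv 0 1 f y)).
  nra.
Qed.

Lemma bracket_vnorm_le f g y :
  vnorm (bracket f g y) <= vnorm (dirder g f y) + vnorm (dirder f g y).
Proof.
  unfold bracket. eapply Rle_trans; [apply vnorm_vadd_le|].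
  rewrite vnorm_vscal, Rabs_left by lra. lra.
Qed.

Lemma nfun_le_bounds sigma b y N :
  nfun sigma b y <= N ->
  vnorm (sigma y) <= N /\ vnorm (b y) <= N /\
  vnorm (dpartv 1 0 sigma y) + vnorm (dpartv 0 1 sigma y) <= N /\
  vnorm (dirder b sigma y) <= N * N /\ vnorm (bracket b sigma y) <= 2 * (N * N).
Proof.
  intros Hn. pose proof (nfun_ge_first_order sigma b y) as Hge.
  pose proof (vnorm_ge0 (b y)); pose proof (vnorm_ge0 (sigma y)).
  pose proof (vnorm_ge0 (dpartv 1 0 b y)); pose proof (vnorm_ge0 (dpartv 0 1 b y)).
  pose proof (vnorm_ge0 (dpartv 1 0 sigma y)); pose proof (vnorm_ge0 (dpartv 0 1 sigma y)).
  assert (Hbs : vnorm (dirder b sigma y) <= N * N)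
    by (eapply Rle_trans; [apply dirder_vnorm_le|]; apply Rmult_le_compat; lra).
  assert (Hsb : vnorm (dirder sigma b y) <= N * N)
    by (eapply Rle_trans; [apply dirder_vnorm_le|]; apply Rmult_le_compat; lra).
  pose proof (bracket_vnorm_le b sigma y).
  repeat split; lra.
Qed.

Lemma Rabs_incr_le_MVT (g : R -> R) a h M :
  (forall t, Rmin a (a + h) <= t <= Rmax a (a + h) -> ex_derive g t /\ Rabs (Derive g t) <= M) ->
  Rabs (g (a + h) - g a) <= M * Rabs h.
Proof.
  intros H.
  destruct (MVT_gen g a (a + h) (Derive g)) as [c [Hc E]].
  - intros t Ht. apply Derive_correct, H. lra.
  - intros t Ht. apply continuity_pt_filterlim, (ex_derive_continuous g), H. lra.
  - rewrite E, Rabs_mult. replace (a + h - a) with h by ring.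
    apply Rmult_le_compat_r; [apply Rabs_pos | apply H; lra].
Qed.

Lemma Rabs_sub_le_between a h t :
  Rmin a (a + h) <= t <= Rmax a (a + h) -> Rabs (t - a) <= Rabs h.
Proof.
  unfold Rmin, Rmax. destruct (Rle_dec a (a + h)); unfold Rabs; repeat destruct Rcase_abs; lra.
Qed.

(* Moving first along the second coordinate and then along the first keeps
   the path inside the l1-ball of radius [|h1| + |h2|] around [p]. *)
Lemma Rabs_incr_le_l1 (f : pt -> R) p h M :
  (forall q : pt, ex_derive (fun t => f (t, snd q)) (fst q) /\
                  ex_derive (fun t => f (fst q, t)) (snd q)) ->
  (forall q : pt, Rabs (fst q - fst p) + Rabs (snd q - snd p) <= Rabs (fst h) + Rabs (snd h) ->
     Rabs (Defs.d1 f q) <= M /\ Rabs (Defs.d2 f q) <= M) ->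
  Rabs (f (vadd p h) - f p) <= M * (Rabs (fst h) + Rabs (snd h)).
Proof.
  destruct p as [x1 x2], h as [h1 h2]; unfold vadd; cbn [fst snd]. intros Hd Hb.
  assert (S1 : Rabs (f (x1 + h1, x2 + h2) - f (x1, x2 + h2)) <= M * Rabs h1).
  { apply (Rabs_incr_le_MVT (fun t => f (t, x2 + h2))). intros t Ht. split.
    - apply (Hd (t, x2 + h2)).
    - apply (Hb (t, x2 + h2)). cbn [fst snd]. replace (x2 + h2 - x2) with h2 by ring.
      pose proof (Rabs_sub_le_between _ _ _ Ht). lra. }
  assert (S2 : Rabs (f (x1, x2 + h2) - f (x1, x2)) <= M * Rabs h2).
  { apply (Rabs_incr_le_MVT (fun t => f (x1, t))). intros t Ht. split.
    - apply (Hd (x1, t)).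
    - apply (Hb (x1, t)). cbn [fst snd]. rewrite Rminus_diag, Rabs_R0.
      pose proof (Rabs_sub_le_between _ _ _ Ht). pose proof (Rabs_pos h1). lra. }
  replace (f (x1 + h1, x2 + h2) - f (x1, x2))
    with ((f (x1 + h1, x2 + h2) - f (x1, x2 + h2)) + (f (x1, x2 + h2) - f (x1, x2))) by ring.
  eapply Rle_trans; [apply Rabs_triang|]. lra.
Qed.

Lemma vdist_incr_le f p h M :
  C3 f ->
  (forall q : pt, Rabs (fst q - fst p) + Rabs (snd q - snd p) <= Rabs (fst h) + Rabs (snd h) ->
     vnorm (dpartv 1 0 f q) + vnorm (dpartv 0 1 f q) <= M) ->
  vdist (f (vadd p h)) (f p) <= 2 * M * (Rabs (fst h) + Rabs (snd h)).
Proof.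
  intros [Hf1 Hf2] Hb.
  assert (Hpartials : forall q, Rabs (fst q - fst p) + Rabs (snd q - snd p) <= Rabs (fst h) + Rabs (snd h) ->
    vnorm (dpartv 1 0 f q) <= M /\ vnorm (dpartv 0 1 f q) <= M).
  { intros q Hq. specialize (Hb q Hq).
    pose proof (vnorm_ge0 (dpartv 1 0 f q)); pose proof (vnorm_ge0 (dpartv 0 1 f q)). lra. }
  assert (H1 : Rabs (fst (f (vadd p h)) - fst (f p)) <= M * (Rabs (fst h) + Rabs (snd h))).
  { apply (Rabs_incr_le_l1 (fun q => fst (f q))).
    - intros q. exact (proj1 Hf1 nil (Nat.le_0_l 2) q).
    - intros q Hq. destruct (Hpartials q Hq).
      split; eapply Rle_trans; [exact (Rabs_fst_le_vnorm (dpartv 1 0 f q)) | lra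
                               | exact (Rabs_fst_le_vnorm (dpartv 0 1 f q)) | lra]. }
  assert (H2 : Rabs (snd (f (vadd p h)) - snd (f p)) <= M * (Rabs (fst h) + Rabs (snd h))).
  { apply (Rabs_incr_le_l1 (fun q => snd (f q))).
    - intros q. exact (proj1 Hf2 nil (Nat.le_0_l 2) q).
    - intros q Hq. destruct (Hpartials q Hq).
      split; eapply Rle_trans; [exact (Rabs_snd_le_vnorm (dpartv 1 0 f q)) | lra
                               | exact (Rabs_snd_le_vnorm (dpartv 0 1 f q)) | lra]. }
  unfold vdist. eapply Rle_trans; [apply vnorm_le_l1|]. cbn [fst snd]. lra.
Qed.

Lemma vdist_diag u : vdist u u = 0.
Proof. unfold vdist, vnorm; cbn [fst snd]. rewrite <- sqrt_0. f_equal. ring. Qed.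

Lemma vdist_vadd_l u d : vdist (vadd u d) u = vnorm d.
Proof. unfold vdist, vnorm, vadd; cbn [fst snd]. f_equal. ring. Qed.

Lemma mdet_vadd_l u v w : mdet (vadd u v, w) = mdet (u, w) + mdet (v, w).
Proof. unfold mdet, vadd; cbn [fst snd]. ring. Qed.

Lemma mdet_vscal_l c u w : mdet (vscal c u, w) = c * mdet (u, w).
Proof. unfold mdet, vscal; cbn [fst snd]. ring. Qed.

Lemma Adelta_dmat sigma b delta y :
  0 <= delta -> Adelta sigma b delta y = dmat (sqrt delta) (sigma y) (bracket b sigma y).
Proof. intros Hd. unfold Adelta, dmat. rewrite sqrt_sqrt by exact Hd. reflexivity. Qed.

Lemma Abar_dmat sigma b delta x :
  0 <= delta ->
  Abar sigma b delta x =
  dmat (sqrt delta) (vadd (sigma x) (vscal delta (dirder b sigma x))) (bracket b sigma x).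
Proof. intros Hd. unfold Abar, dmat. rewrite sqrt_sqrt by exact Hd. reflexivity. Qed.

Lemma pow4_div_le_pow5 N Lam : 1 <= N -> 0 < Lam <= 1 -> N ^ 4 / Lam <= (N / Lam) ^ 5.
Proof.
  intros HN HLam.
  assert (HN4 : 1 <= N ^ 4) by (apply pow_R1_Rle; lra).
  assert (HL4 : Lam ^ 4 <= 1) by (rewrite <- (pow1 4); apply pow_incr; lra).
  assert (HL4pos : 0 < Lam ^ 4) by (apply pow_lt; lra).
  replace ((N / Lam) ^ 5) with (N ^ 4 / Lam * (N / Lam ^ 4)) by (field; lra).
  assert (1 <= N / Lam ^ 4).
  { apply (Rmult_le_reg_r (Lam ^ 4)); [lra|]. unfold Rdiv. rewrite Rmult_assoc, Rinv_l; lra. }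
  assert (0 <= N ^ 4 / Lam) by (apply Rdiv_le_0_compat; lra).
  nra.
Qed.

Section Comparison.

Variables (sigma b : pt -> pt) (x : pt) (N Lam delta : R).
Hypotheses (Hsigma : C3 sigma) (HN : 1 <= N) (HLam : 0 < Lam <= 1)
  (Hball : forall y, vdist y x < 1 -> min_eig_ge (Amat sigma b y) Lam /\ nfun sigma b y <= N)
  (Hdelta : 0 < delta) (Hsmall : delta * (4 * (N / Lam) ^ 5) <= 1).

Let h := vscal delta (b x).

Lemma delta_N4_le : delta * N ^ 4 <= Lam / 4.
Proof.
  pose proof (pow4_div_le_pow5 N Lam HN HLam).
  assert (delta * (4 * (N ^ 4 / Lam)) <= 1) by nra.
  apply (Rmult_le_reg_r (4 / Lam)); [apply Rdiv_lt_0_compat; lra|].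
  replace (Lam / 4 * (4 / Lam)) with 1 by (field; lra).
  replace (delta * N ^ 4 * (4 / Lam)) with (delta * (4 * (N ^ 4 / Lam))) by (field; lra).
  assumption.
Qed.

Lemma delta_le_1 : delta <= 1.
Proof. pose proof delta_N4_le. assert (1 <= N ^ 4) by (apply pow_R1_Rle; lra). nra. Qed.

Lemma x_in_ball : vdist x x < 1.
Proof. rewrite vdist_diag. lra. Qed.

Lemma nfun_at_x : nfun sigma b x <= N.
Proof. apply Hball, x_in_ball. Qed.

Lemma mdet_at_x_ge : Lam <= Rabs (mdet (sigma x, bracket b sigma x)).
Proof. exact (min_eig_ge_Rabs_mdet _ _ (proj1 HLam) (proj1 (Hball x x_in_ball))). Qed.

Lemma l1_norm_h_le : Rabs (fst h) + Rabs (snd h) <= 2 * delta * N.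
Proof.
  pose proof (Rabs_fst_le_vnorm h); pose proof (Rabs_snd_le_vnorm h).
  assert (vnorm h <= delta * N).
  { unfold h. rewrite vnorm_vscal, Rabs_right by lra.
    apply Rmult_le_compat_l; [lra|]. apply (nfun_le_bounds _ _ _ _ nfun_at_x). }
  lra.
Qed.

Lemma l1_ball_h_in_ball q :
  Rabs (fst q - fst x) + Rabs (snd q - snd x) <= Rabs (fst h) + Rabs (snd h) -> vdist q x < 1.
Proof.
  intros Hq. pose proof l1_norm_h_le. pose proof delta_N4_le.
  assert (N <= N ^ 4) by (replace (N ^ 4) with (N * (N * N * N)) by ring;
                          assert (1 <= N * N * N) by nra; nra).
  unfold vdist. eapply Rle_lt_trans; [apply vnorm_le_l1|]. cbn [fst snd]. nra.
Qed.

Lemma xhat_in_ball : vdist (vadd x h) x < 1.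
Proof.
  apply l1_ball_h_in_ball. unfold vadd; cbn [fst snd].
  replace (fst x + fst h - fst x) with (fst h) by ring.
  replace (snd x + snd h - snd x) with (snd h) by ring. lra.
Qed.

Lemma sigma_xhat_near : vdist (sigma x) (sigma (vadd x h)) <= 4 * (N * N) * delta.
Proof.
  rewrite vdist_sym. eapply Rle_trans.
  - apply (vdist_incr_le sigma x h N Hsigma). intros q Hq.
    apply (nfun_le_bounds _ _ _ _ (proj2 (Hball q (l1_ball_h_in_ball q Hq)))).
  - pose proof l1_norm_h_le. nra.
Qed.

Lemma Abar_mdet_ge :
  Lam / 2 <= Rabs (mdet (vadd (sigma x) (vscal delta (dirder b sigma x)), bracket b sigma x)).
Proof.
  rewrite mdet_vadd_l, mdet_vscal_l.
  pose proof mdet_at_x_ge.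
  destruct (nfun_le_bounds _ _ _ _ nfun_at_x) as (_ & _ & _ & Hv & Hc).
  pose proof (Rabs_mdet_le_mul _ _ _ _ Hv Hc).
  pose proof delta_N4_le.
  assert (Rabs (delta * mdet (dirder b sigma x, bracket b sigma x)) <= Lam / 2).
  { rewrite Rabs_mult, Rabs_right by lra. nra. }
  pose proof (Rabs_triang_inv (mdet (sigma x, bracket b sigma x))
                              (- (delta * mdet (dirder b sigma x, bracket b sigma x)))).
  rewrite Rabs_Ropp in *. unfold Rminus in *. rewrite Ropp_involutive in *.
  lra.
Qed.

Lemma sqrt_delta_pos : 0 < sqrt delta.
Proof. apply sqrt_lt_R0. exact Hdelta. Qed.

Lemma sqrt_delta_sqr : sqrt delta * sqrt delta = delta.
Proof. apply sqrt_sqrt. lra. Qed.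

Lemma comparison_constant_le :
  (2 * (2 * (N * N)) * (2 * (N * N)) + 2 * (N * N) * (4 * (N * N)) + 2 * (N * N) * (2 * (N * N)))
    / (Lam / 2) <= 40 * (N / Lam) ^ 5.
Proof.
  pose proof (pow4_div_le_pow5 N Lam HN HLam).
  replace ((2 * (2 * (N * N)) * (2 * (N * N)) + 2 * (N * N) * (4 * (N * N))
            + 2 * (N * N) * (2 * (N * N))) / (Lam / 2))
    with (40 * (N ^ 4 / Lam)) by (field; lra).
  lra.
Qed.

Lemma Adelta_invertible y : vdist y x < 1 -> minvertible (Adelta sigma b delta y).
Proof.
  intros Hy. unfold minvertible. rewrite Adelta_dmat by lra.
  apply mdet_dmat_neq0; [pose proof sqrt_delta_pos; lra|].
  pose proof (min_eig_ge_Rabs_mdet _ _ (proj1 HLam) (proj1 (Hball y Hy))).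
  intro E. unfold Amat in *. rewrite E, Rabs_R0 in *. lra.
Qed.

Lemma Abar_invertible : minvertible (Abar sigma b delta x).
Proof.
  unfold minvertible. rewrite Abar_dmat by lra.
  apply mdet_dmat_neq0; [pose proof sqrt_delta_pos; lra|].
  pose proof Abar_mdet_ge. intro E. rewrite E, Rabs_R0 in *. lra.
Qed.

Lemma Abar_equiv : mnorm_equiv (40 * (N / Lam) ^ 5) (Adelta sigma b delta x) (Abar sigma b delta x).
Proof.
  rewrite Adelta_dmat, Abar_dmat by lra.
  destruct (nfun_le_bounds _ _ _ _ nfun_at_x) as (Hs & _ & _ & Hv & Hc).
  pose proof delta_le_1. pose proof sqrt_delta_sqr.
  assert (HN2 : N <= N * N) by nra.
  apply (mnorm_dmat_equiv _ (2 * (N * N)) (2 * (N * N)) (4 * (N * N)) (Lam / 2));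
    auto using sqrt_delta_pos, Abar_mdet_ge, comparison_constant_le; try lra.
  - eapply Rle_trans; [apply vnorm_vadd_le|]. rewrite vnorm_vscal, Rabs_right by lra. nra.
  - rewrite vdist_sym, vdist_vadd_l, vnorm_vscal, Rabs_right by lra. nra.
  - pose proof mdet_at_x_ge. lra.
Qed.

Lemma xhat_equiv :
  mnorm_equiv (40 * (N / Lam) ^ 5) (Adelta sigma b delta x) (Adelta sigma b delta (vadd x h)).
Proof.
  rewrite !Adelta_dmat by lra.
  pose proof (proj2 (Hball _ xhat_in_ball)) as Hnxh.
  destruct (nfun_le_bounds _ _ _ _ nfun_at_x) as (Hs & _ & _ & _ & Hc).
  destruct (nfun_le_bounds _ _ _ _ Hnxh) as (Hs' & _ & _ & _ & Hc').
  assert (HN2 : N <= N * N) by nra.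
  apply (mnorm_dmat_equiv _ (2 * (N * N)) (2 * (N * N)) (4 * (N * N)) (Lam / 2));
    auto using sqrt_delta_pos, comparison_constant_le; try lra.
  - rewrite sqrt_delta_sqr. apply delta_le_1.
  - rewrite sqrt_delta_sqr. apply sigma_xhat_near.
  - pose proof mdet_at_x_ge. lra.
  - pose proof (min_eig_ge_Rabs_mdet _ _ (proj1 HLam) (proj1 (Hball _ xhat_in_ball))).
    unfold Amat in *. lra.
Qed.

End Comparison.

Theorem lemmaA3 :
  exists K1 q1 K2 q2 : R, 1 <= K1 /\ 1 <= q1 /\ 1 <= K2 /\ 1 <= q2 /\
  forall (sigma b : pt -> pt) (x : pt) (N Lam : R),
    C3 sigma -> C3 b ->
    0 < Lam <= 1 -> 1 <= N ->
    (forall y : pt, vdist y x < 1 ->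
        min_eig_ge (Amat sigma b y) Lam /\ nfun sigma b y <= N) ->
    (exists kappa : pt -> R,
        forall y : pt, vdist y x < 1 ->
          ex_filterdiff kappa (locally y) /\
          dirder sigma sigma y = vscal (kappa y) (sigma y) /\
          Rabs (kappa y) <= nfun sigma b y /\
          vnorm (grad kappa y) <= nfun sigma b y) ->
    let C := K1 * Rpower (N / Lam) q1 in
    let dstar := / (K2 * Rpower (N / Lam) q2) in
    forall delta : R, 0 < delta <= dstar ->
    let xhat := vadd x (vscal delta (b x)) in
    minvertible (Adelta sigma b delta x) /\
    minvertible (Abar sigma b delta x) /\
    minvertible (Adelta sigma b delta xhat) /\
    forall xi : pt,
      / C * mnorm (Adelta sigma b delta x) xi <= mnorm (Abar sigma b delta x) xi /\
      mnorm (Abar sigma b delta x) xi <= C * mnorm (Adelta sigma b delta x) xi /\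
      / C * mnorm (Adelta sigma b delta x) xi <= mnorm (Adelta sigma b delta xhat) xi /\
      mnorm (Adelta sigma b delta xhat) xi <= C * mnorm (Adelta sigma b delta x) xi.
Proof.
  exists 40, 5, 4, 5. do 4 (split; [lra|]).
  intros sigma b x N Lam Hsigma _ HLam HN Hball _ C dstar delta [Hdelta Hdstar] xhat.
  assert (HL : 1 <= N / Lam).
  { apply (Rmult_le_reg_r Lam); [lra|]. unfold Rdiv. rewrite Rmult_assoc, Rinv_l; lra. }
  assert (HL5 : 1 <= (N / Lam) ^ 5) by (apply pow_R1_Rle; exact HL).
  assert (Hpow : Rpower (N / Lam) 5 = (N / Lam) ^ 5).
  { rewrite <- Rpower_pow by lra. f_equal. simpl. ring. }
  unfold dstar in Hdstar. rewrite Hpow in Hdstar.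
  assert (Hsmall : delta * (4 * (N / Lam) ^ 5) <= 1).
  { apply (Rmult_le_compat_r (4 * (N / Lam) ^ 5)) in Hdstar; [|lra].
    rewrite Rinv_l in Hdstar by lra. exact Hdstar. }
  unfold C, xhat. rewrite Hpow.
  split; [apply (Adelta_invertible sigma b x N Lam); auto; rewrite vdist_diag; lra|].
  split; [apply (Abar_invertible sigma b x N Lam); auto|].
  split; [apply (Adelta_invertible sigma b x N Lam); auto; apply (xhat_in_ball sigma b x N Lam delta); assumption|].
  intros xi.
  destruct (Abar_equiv sigma b x N Lam delta HN HLam Hball Hdelta Hsmall xi).
  destruct (xhat_equiv sigma b x N Lam delta Hsigma HN HLam Hball Hdelta Hsmall xi).
  auto.
Qed.
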